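(* Let $V$ be a vertex algebra and let $M$ be a $\mathbb{C}$-subspace of $V$ with $C_2(V)\subseteq M$. Let $a\in V$. Then: (1) $a\in r_{0,-1}(M)$ if and only if $a+C_2(V)\in r(M/C_2(V))$; (2) $a\in sr_{0,-1}(M)$ if and only if $a+C_2(V)\in sr(M/C_2(V))$. Consequently, $M$ is an $MZ_{0,-1}$-subspace of $V$ if and only if $M/C_2(V)$ is a Mathieu-Zhao subspace of the commutative associative algebra $V/C_2(V)$.
   Context: A vertex algebra $(V,Y,\mathbf{1})$ is over $\mathbb{C}$; for $u\in V$ write $Y(u,z)=\sum_{n\in\mathbb{Z}}u_nz^{-n-1}$ with $u_n\in\operatorname{End}V$. Iterated products are nested to the right: $v_{n_1}v_{n_2}\cdots v_{n_t}v=v_{n_1}(v_{n_2}(\cdots(v_{n_t}v)))$. $C_2(V)=\operatorname{span}_{\mathbb{C}}\{u_{-2}v: u,v\in V\}$. The quotient $V/C_2(V)$ is a commutative associative unital algebra with product $(a+C_2(V))(b+C_2(V))=a_{-1}b+C_2(V)$ and identity $\mathbf{1}+C_2(V)$. For a subspace $M\subseteq V$: $r_{0,-1}(M)$ is the set of $v\in V$ for which there is $m\ge 0$ with $v_{n_1}\cdots v_{n_t}v\in M$ for all $t\ge m$ and all $n_1,\dots,n_t\in\{0,-1\}$. $lsr_{0,-1}(M)$ is the set of $v\in V$ such that for every $b\in V$ there is $m\ge0$ with $b_sv_{n_1}\cdots v_{n_t}v\in M$ for all $t\ge m$ and all $s,n_1,\dots,n_t\in\{0,-1\}$. $rsr_{0,-1}(M)$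 is the set of $v\in V$ such that for every $w\in V$ there is $m\ge 0$ with $(v_{n_1}\cdots v_{n_t}v)_nw\in M$ for all $t\ge m$ and all $n,n_1,\dots,n_t\in\{0,-1\}$. $sr_{0,-1}(M)=lsr_{0,-1}(M)\cap rsr_{0,-1}(M)$. $M$ is an $MZ_{0,-1}$-subspace of $V$ if $r_{0,-1}(M)=sr_{0,-1}(M)$. For a commutative associative unital algebra $A$ and a subspace $U$: $r(U)=\{a\in A:\exists m\ge1,\ a^t\in U\ \forall t\ge m\}$, $sr(U)=\{a\in A:\forall b,c\in A\ \exists m\ge 1,\ ba^tc\in U\ \forall t\ge m\}$; $U$ is a Mathieu-Zhao subspace of $A$ if $r(U)=sr(U)$. *)

From HB Require Import structures.
From mathcomp Require Import all_boot all_order all_algebra.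
From mathcomp Require Import complex.
From mathcomp Require Import Rstruct.
From Stdlib Require Rdefinitions.
Set Implicit Arguments. Unset Strict Implicit. Unset Printing Implicit Defensive.
Import Order.TTheory GRing.Theory Num.Theory.
Local Open Scope ring_scope.

Definition CC : fieldType := complex Rdefinitions.R.

Definition binz (k : int) (i : nat) : CC :=
  (\prod_(j < i) (k%:~R - j%:R)) / (i`!)%:R.

(* A vertex algebra (V, Y, 1) over C: Y u n v stands for u_n v.
   Axioms (Lepowsky--Li): linearity, truncation, vacuum, creation and the
   Jacobi identity in its component (Borcherds) form.  All sums in the
   Borcherds identity are finite by truncation; we state it as equality of
   the partial sums over i < N for all N large enough. *)
Definition is_vertex_algebra (V : lmodType CC) (Y : V -> int -> V -> V) (one : V) : Prop :=
  [/\ (forall (c : CC) (u u' v : V) (n : int), Y (c *: u + u') n v = c *: Y u n v + Y u' n v),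
      (forall (c : CC) (u v v' : V) (n : int), Y u n (c *: v + v') = c *: Y u n v + Y u n v'),
      (forall u v : V, exists N : int, forall n : int, N <= n -> Y u n v = 0),
      (forall (n : int) (v : V), Y one n v = if n == -1 then v else 0)
    & (forall u : V, Y u (-1) one = u /\ forall n : int, 0 <= n -> Y u n one = 0)
      /\ (forall (u v w : V) (m n k : int), exists N0 : nat, forall N : nat, (N0 <= N)%N ->
           \sum_(i < N) binz m i *: Y (Y u (k + i%:Z) v) (m + n - i%:Z) w
           = \sum_(i < N) ((-1) ^+ i * binz k i) *:
                 (Y u (m + k - i%:Z) (Y v (n + i%:Z) w)
                  - (-1) ^ k *: Y v (n + k - i%:Z) (Y u (m + i%:Z) w)))].

Definition is_subspace (V : lmodType CC) (M : V -> Prop) : Prop :=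
  [/\ M 0, (forall x y, M x -> M y -> M (x + y)) & (forall (c : CC) x, M x -> M (c *: x))].

Definition C2 (V : lmodType CC) (Y : V -> int -> V -> V) (x : V) : Prop :=
  exists s : seq (CC * V * V), x = \sum_(p <- s) p.1.1 *: Y p.1.2 (-2) p.2.

Definition in01 (n : int) : bool := (n == 0) || (n == -1).

Definition iterprod (V : lmodType CC) (Y : V -> int -> V -> V) (v : V) (s : seq int) : V :=
  foldr (fun n acc => Y v n acc) v s.

Definition r01 (V : lmodType CC) (Y : V -> int -> V -> V) (M : V -> Prop) (v : V) : Prop :=
  exists m : nat, forall s : seq int, all in01 s -> (m <= size s)%N -> M (iterprod Y v s).

Definition lsr01 (V : lmodType CC) (Y : V -> int -> V -> V) (M : V -> Prop) (v : V) : Prop :=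
  forall b : V, exists m : nat, forall (r : int) (s : seq int),
    in01 r -> all in01 s -> (m <= size s)%N -> M (Y b r (iterprod Y v s)).

Definition rsr01 (V : lmodType CC) (Y : V -> int -> V -> V) (M : V -> Prop) (v : V) : Prop :=
  forall w : V, exists m : nat, forall (n : int) (s : seq int),
    in01 n -> all in01 s -> (m <= size s)%N -> M (Y (iterprod Y v s) n w).

Definition sr01 (V : lmodType CC) (Y : V -> int -> V -> V) (M : V -> Prop) (v : V) : Prop :=
  lsr01 Y M v /\ rsr01 Y M v.

Definition MZ01 (V : lmodType CC) (Y : V -> int -> V -> V) (M : V -> Prop) : Prop :=
  forall v : V, r01 Y M v <-> sr01 Y M v.

Definition rad_alg (A : comPzRingType) (U : A -> Prop) (a : A) : Prop :=
  exists m : nat, (1 <= m)%N /\ forall t : nat, (m <= t)%N -> U (a ^+ t).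

Definition srad_alg (A : comPzRingType) (U : A -> Prop) (a : A) : Prop :=
  forall b c : A, exists m : nat, (1 <= m)%N /\ forall t : nat, (m <= t)%N -> U (b * a ^+ t * c).

Definition MZsub (A : comPzRingType) (U : A -> Prop) : Prop :=
  forall a : A, rad_alg U a <-> srad_alg U a.

(* pi : V -> A presents A as the algebra V/C_2(V): pi is additive and onto,
   with kernel exactly C_2(V), and maps the product a_{-1} b to the product of A
   and the vacuum to 1.  Any such (A, pi) is canonically isomorphic to V/C_2(V)
   with its commutative associative product (a + C_2)(b + C_2) = a_{-1} b + C_2. *)
Definition is_C2_quotient (V : lmodType CC) (Y : V -> int -> V -> V) (one : V)
    (A : comPzRingType) (pi : V -> A) : Prop :=
  [/\ (forall x y : V, pi (x + y) = pi x + pi y),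
      (forall z : A, exists x : V, pi x = z),
      (forall x : V, pi x = 0 <-> C2 Y x),
      (forall x y : V, pi (Y x (-1) y) = pi x * pi y)
    & pi one = 1].

Definition qimage (V : lmodType CC) (A : comPzRingType) (pi : V -> A) (M : V -> Prop) : A -> Prop :=
  fun z => exists x : V, M x /\ pi x = z.

From mathcomp Require Import all_boot all_algebra.
From mathcomp Require Import ring zify complex Rstruct.
Import GRing.Theory Num.Theory.
Set Implicit Arguments. Unset Strict Implicit.
Local Open Scope ring_scope.

(* Every product [u_n w] with [n <= -2] lies in C_2(V), since [(u_{-2} 1)_n] is a
   nonzero multiple of [u_{n-1}] for [n <= -2].  With the commutator and associator
   formulas this makes C_2(V) stable under all modes [n <= 0] on either side.  Modulo
   C_2(V), [v_0 v] vanishes and [b_0] is a derivation of the (-1)-product, so an iterated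
   0/(-1)-product of [v] containing a 0-mode lies in C_2(V), whereas [v_{-1}^t v] maps to
   [a^(t+1)], [a = v + C_2(V)].  Likewise [b_0 (v_{-1}^t v)] and [(v_{-1}^t v)_0 w] map
   to [(t+1) (b_0 v) a^t] and [(t+1) a^t (v_0 w)], which turns the conditions defining
   r_{0,-1} and sr_{0,-1} into those defining r and sr in V/C_2(V). *)

Lemma linear_fun0 (R : pzRingType) (U W : lmodType R) (f : U -> W) :
  linear f -> f 0 = 0.
Proof. by move=> flin; have := flin (-1) 0 0; rewrite !scaleN1r !addNr. Qed.

Lemma CC_natS_neq0 n : (n.+1%:R : CC) != 0.
Proof. by rewrite (@pnatr_eq0 (complex Rdefinitions.R)). Qed.

Section C2Subspace.
Variables (V : lmodType CC) (Y : V -> int -> V -> V).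

Lemma C2_0 : C2 Y 0.
Proof. by exists [::]; rewrite big_nil. Qed.

Lemma C2D x y : C2 Y x -> C2 Y y -> C2 Y (x + y).
Proof. by move=> [s1 ->] [s2 ->]; exists (s1 ++ s2); rewrite big_cat. Qed.

Lemma C2Z (c : CC) x : C2 Y x -> C2 Y (c *: x).
Proof.
move=> [s ->]; exists [seq (c * p.1.1, p.1.2, p.2) | p <- s].
by rewrite big_map scaler_sumr; apply: eq_bigr => p _; rewrite scalerA.
Qed.

Lemma C2N x : C2 Y x -> C2 Y (- x).
Proof. by rewrite -scaleN1r; apply: C2Z. Qed.

Lemma C2B x y : C2 Y x -> C2 Y y -> C2 Y (x - y).
Proof. by move=> Cx /C2N; apply: C2D. Qed.

Lemma C2_mulrSnK x n : C2 Y (x *+ n.+1) -> C2 Y x.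
Proof.
rewrite -scaler_nat => /(C2Z n.+1%:R^-1).
by rewrite scalerA mulVf ?scale1r // CC_natS_neq0.
Qed.

Lemma C2_sum (I : finType) (F : I -> V) :
  (forall i, C2 Y (F i)) -> C2 Y (\sum_i F i).
Proof. by move=> CF; apply: (big_ind (C2 Y)) => //; [exact: C2_0 | exact: C2D]. Qed.

Lemma C2_Ym2 u w : C2 Y (Y u (-2) w).
Proof. by exists [:: (1, u, w)]; rewrite big_seq1 scale1r. Qed.

Lemma C2_linear_image (f : V -> V) :
  linear f -> (forall u w, C2 Y (f (Y u (-2) w))) -> forall x, C2 Y x -> C2 Y (f x).
Proof.
move=> flin fC2 _ [s ->]; elim: s => [|p s IH].
  by rewrite big_nil linear_fun0 //; exact: C2_0.
by rewrite big_cons flin; apply: C2D => //; apply: C2Z.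
Qed.

End C2Subspace.

Lemma binzn0 k : binz k 0 = 1.
Proof. by rewrite /binz big_ord0 divr1. Qed.

Lemma binz0n i : (0 < i)%N -> binz 0 i = 0.
Proof. by case: i => // i _; rewrite /binz big_ord_recl subrr !mul0r. Qed.

Lemma binzN2 i : binz (-2) i = (-1) ^+ i * i.+1%:R.
Proof.
have prodN2 j : \prod_(l < j) ((-2 : int)%:~R - l%:R : CC) = (-1) ^+ j * j.+1`!%:R.
  elim: j => [|j IH]; first by rewrite big_ord0 expr0 mul1r.
  rewrite big_ord_recr IH [j.+2`!]factS natrM exprS /=.
  have -> : ((-2 : int)%:~R - j%:R : CC) = - j.+2%:R by ring.
  ring.
rewrite /binz prodN2 factS natrM mulrA mulfK // -(prednK (fact_gt0 i)).
exact: CC_natS_neq0.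
Qed.

Section BinomialSums.
Variables (V : lmodType CC) (L : nat) (F : 'I_L.+1 -> V).

Lemma sum_binz0 : \sum_(i < L.+1) binz 0 i *: F i = F ord0.
Proof.
rewrite big_ord_recl binzn0 scale1r big1 ?addr0 // => i _.
by rewrite binz0n // scale0r.
Qed.

Lemma sum_mul_binz0 (c : 'I_L.+1 -> CC) :
  \sum_(i < L.+1) (c i * binz 0 i) *: F i = c ord0 *: F ord0.
Proof.
rewrite big_ord_recl binzn0 mulr1 big1 ?addr0 // => i _.
by rewrite binz0n // mulr0 scale0r.
Qed.

End BinomialSums.

Lemma in01_le0 (n : int) : in01 n -> n <= 0.
Proof. by case/orP=> /eqP ->. Qed.

Lemma all_in01_nseq k : all in01 (nseq k (-1)).
Proof. by elim: k. Qed.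

Lemma iterprod_nseqS (V : lmodType CC) (Y : V -> int -> V -> V) v k :
  iterprod Y v (nseq k.+1 (-1)) = Y v (-1) (iterprod Y v (nseq k (-1))).
Proof. by []. Qed.

Section VertexAlgebra.
Variables (V : lmodType CC) (Y : V -> int -> V -> V) (one : V).
Hypothesis HV : is_vertex_algebra Y one.

Lemma linear_Yl n w : linear (fun u => Y u n w).
Proof. by case: HV => Ylin _ _ _ _ c u u'; apply: Ylin. Qed.

Lemma linear_Yr u n : linear (Y u n).
Proof. by case: HV => _ Ylin _ _ _ c v v'; apply: Ylin. Qed.

Lemma commutator_formula u v w (m n : int) : exists N0, forall N, (N0 <= N)%N ->
  \sum_(i < N) binz m i *: Y (Y u i v) (m + n - i%:Z) w = Y u m (Y v n w) - Y v n (Y u m w).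
Proof.
have [_ _ _ _ [_ borcherds]] := HV.
have [N0 eqN] := borcherds u v w m n 0.
exists N0.+1 => -[//|N] /ltnW /eqN.
rewrite sum_mul_binz0 /= expr0z !scale1r !addr0 => <-.
by apply: eq_bigr => i _; rewrite add0r.
Qed.

Lemma associator_formula u v w (n k : int) : exists N0, forall N, (N0 <= N)%N ->
  Y (Y u k v) n w = \sum_(i < N) ((-1) ^+ i * binz k i) *:
     (Y u (k - i%:Z) (Y v (n + i%:Z) w) - (-1) ^ k *: Y v (n + k - i%:Z) (Y u i w)).
Proof.
have [_ _ _ _ [_ borcherds]] := HV.
have [N0 eqN] := borcherds u v w 0 n k.
exists N0.+1 => -[//|N] /ltnW /eqN; by rewrite sum_binz0 /= !addr0 !add0r.
Qed.

(* [u_{-2} 1] is the translate [D u], and [(D u)_n = -n u_{n-1}]. *)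
Lemma derivative_mode u K w :
  Y (Y u (-2) one) (- K.+2%:Z) w = Y u (- K.+3%:Z) w *+ K.+2.
Proof.
have [_ _ _ Yone _] := HV.
have [N0 /(_ (N0 + K).+2 (leq_trans (leq_addr K N0) (leqW (leqnSn _)))) ->] :=
  associator_formula u one w (- K.+2%:Z) (-2).
have ltK : (K.+1 < (N0 + K).+2)%N by rewrite !ltnS leq_addl.
rewrite (bigD1 (Ordinal ltK)) //= big1 ?addr0 => [|i /eqP neq_iK]; rewrite !Yone.
  have -> : (- K.+2%:Z + K.+1%:Z == -1) by apply/eqP; lia.
  have -> : (- K.+2%:Z + -2 - K.+1%:Z == -1) = false by apply/eqP; lia.
  have -> : (-2 - K.+1%:Z) = - K.+3%:Z by lia.
  by rewrite scaler0 subr0 binzN2 mulrA -exprMn mulrNN mulr1 expr1n mul1r scaler_nat.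
have -> : (- K.+2%:Z + i%:Z == -1) = false.
  by apply/eqP => eq_i; apply: neq_iK; apply: val_inj => /=; lia.
have -> : (- K.+2%:Z + -2 - i%:Z == -1) = false by apply/eqP; lia.
by rewrite !(linear_fun0 (linear_Yr _ _)) scaler0 subr0 scaler0.
Qed.

Lemma C2_Y_le_m2 (n : int) u w : n <= -2 -> C2 Y (Y u n w).
Proof.
move=> n_le; have [K ->] : exists K : nat, n = - K.+2%:Z by exists (`|n| - 2)%N; lia.
elim: K u w => [|K IH] u w; first exact: C2_Ym2.
by apply: (@C2_mulrSnK _ _ _ K.+1); rewrite -derivative_mode; apply: IH.
Qed.

Lemma C2_Yr b (m : int) x : m <= 0 -> C2 Y x -> C2 Y (Y b m x).
Proof.
move=> m_le0; apply: (C2_linear_image (linear_Yr b m)) => u w.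
have [N0 /(_ N0 (leqnn N0)) eqN] := commutator_formula b u w m (-2).
rewrite -[Y b m _](subrK (Y u (-2) (Y b m w))) -eqN.
by apply: C2D (C2_Ym2 _ _ _); apply: C2_sum => i; apply/C2Z/C2_Y_le_m2; lia.
Qed.

Lemma C2_Yl (n : int) w x : n <= 0 -> C2 Y x -> C2 Y (Y x n w).
Proof.
move=> n_le0; apply: (C2_linear_image (linear_Yl n w)) => u v /=.
have [N0 /(_ N0 (leqnn N0)) ->] := associator_formula u v w n (-2).
apply: C2_sum => i; apply/C2Z/C2B; last apply: C2Z; apply: C2_Y_le_m2; lia.
Qed.

Lemma Y0_derivation b x y :
  Y b 0 (Y x (-1) y) = Y (Y b 0 x) (-1) y + Y x (-1) (Y b 0 y).
Proof.
have [N0 /(_ N0.+1 (leqnSn N0))] := commutator_formula b x y 0 (-1).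
by rewrite sum_binz0 /= add0r subr0 => ->; rewrite subrK.
Qed.

Lemma C2_Ym1_Y0 x y w :
  C2 Y (Y (Y x (-1) y) 0 w - (Y x (-1) (Y y 0 w) + Y y (-1) (Y x 0 w))).
Proof.
have [N0 /(_ N0.+1 (leqnSn N0)) ->] := associator_formula x y w 0 (-1).
rewrite big_ord_recl /= binzn0 mulr1 expr0 scale1r add0r !subr0 exprN1 invrN1 scaleN1r opprK.
rewrite addrAC subrr add0r; apply: C2_sum => i.
by apply/C2Z/C2B; last apply: C2Z; apply: C2_Y_le_m2; rewrite /bump leq0n add1n; lia.
Qed.

Lemma C2_Y0_self v : C2 Y (Y v 0 v).
Proof.
have [_ _ _ _ [create _]] := HV.
have Ym1_one u : Y u (-1) one = u := (create u).1.
have [N0 /(_ N0.+1 (leqnSn N0))] := commutator_formula v v one (-1) 0.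
rewrite big_ord_recl /= binzn0 scale1r addr0 subr0 !Ym1_one (create v).2 //.
rewrite (linear_fun0 (linear_Yr _ _)) sub0r => /eqP.
rewrite -subr_eq0 opprK addrAC addr_eq0 -mulr2n => /eqP v0v2.
apply: (@C2_mulrSnK _ _ _ 1); rewrite v0v2; apply/C2N/C2_sum => i.
by apply/C2Z/C2_Y_le_m2; rewrite /bump leq0n add1n; lia.
Qed.

Lemma C2_Y0_iterprod_m1 v k : C2 Y (Y v 0 (iterprod Y v (nseq k (-1)))).
Proof.
elim: k => [|k IH]; first exact: C2_Y0_self.
rewrite iterprod_nseqS Y0_derivation.
by apply: C2D; [apply: C2_Yl (C2_Y0_self v) | apply: C2_Yr].
Qed.

Lemma iterprod_in01 v s :
  all in01 s -> s = nseq (size s) (-1) \/ C2 Y (iterprod Y v s).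
Proof.
elim: s => [|n s IH] /=; first by left.
case/andP=> /orP [] /eqP -> /IH [-> | Cs]; rewrite ?size_nseq.
- by right; apply: C2_Y0_iterprod_m1.
- by right; apply: C2_Yr.
- by left.
- by right; apply: C2_Yr.
Qed.

End VertexAlgebra.

Section C2Quotient.
Variables (V : lmodType CC) (Y : V -> int -> V -> V) (one : V).
Hypothesis HV : is_vertex_algebra Y one.
Variables (A : comPzRingType) (pi : V -> A).
Hypothesis Hpi : is_C2_quotient Y one pi.
Variable M : V -> Prop.
Hypotheses (HM : is_subspace M) (HC2M : forall x, C2 Y x -> M x).

Lemma pi0 : pi 0 = 0.
Proof. by have [piD _ _ _ _] := Hpi; apply: (addrI (pi 0)); rewrite -piD !addr0. Qed.

Lemma piB x y : pi (x - y) = pi x - pi y.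
Proof.
by have [piD _ _ _ _] := Hpi; apply: (canRL (addrK (pi y))); rewrite -piD subrK.
Qed.

Lemma pi_eq_C2 x y : C2 Y (x - y) -> pi x = pi y.
Proof. by have [_ _ piker _ _] := Hpi; move/piker/eqP; rewrite piB subr_eq0 => /eqP. Qed.

Lemma qimage_pi x : qimage pi M (pi x) <-> M x.
Proof.
split=> [[y [My eq_pi]] | Mx]; last by exists x.
have [_ MD _] := HM; have [_ _ piker _ _] := Hpi.
rewrite -(subrK y x); apply: MD; last exact: My.
by apply/HC2M/piker; rewrite piB eq_pi subrr.
Qed.

Lemma qimage_muln z k : qimage pi M z -> qimage pi M (z *+ k).
Proof.
move=> [x [Mx <-]]; have [M0 MD _] := HM; have [piD _ _ _ _] := Hpi.
elim: k => [|k [y [My eq_y]]]; first by exists 0; split; rewrite ?pi0.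
by exists (x + y); split; [apply: MD | rewrite piD mulrS eq_y].
Qed.

Lemma pi_iterprod_m1 v k : pi (iterprod Y v (nseq k (-1))) = pi v ^+ k.+1.
Proof.
have [_ _ _ piM _] := Hpi.
by elim: k => [|k IH]; rewrite ?expr1 // iterprod_nseqS piM IH -exprS.
Qed.

Lemma pi_Y0_iterprod_m1 b v k :
  pi (Y b 0 (iterprod Y v (nseq k (-1)))) = pi (Y b 0 v) * pi v ^+ k *+ k.+1.
Proof.
have [piD _ _ piM _] := Hpi.
elim: k => [|k IH]; first by rewrite expr0 mulr1.
rewrite iterprod_nseqS (Y0_derivation HV) piD !piM IH pi_iterprod_m1 !exprS; ring.
Qed.

Lemma pi_iterprod_m1_Y0 v w k :
  pi (Y (iterprod Y v (nseq k (-1))) 0 w) = pi v ^+ k * pi (Y v 0 w) *+ k.+1.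
Proof.
have [piD _ _ piM _] := Hpi.
elim: k => [|k IH]; first by rewrite expr0 mul1r.
rewrite iterprod_nseqS (pi_eq_C2 (C2_Ym1_Y0 HV _ _ _)) piD !piM IH pi_iterprod_m1.
by rewrite !exprS; ring.
Qed.

Lemma iterprod_in01_reduce (f : V -> V) v m :
  (forall x, C2 Y x -> C2 Y (f x)) ->
  (forall k, (m <= k)%N -> M (f (iterprod Y v (nseq k (-1))))) ->
  forall s, all in01 s -> (m <= size s)%N -> M (f (iterprod Y v s)).
Proof.
move=> fC2 Mf s /(iterprod_in01 HV v) [-> | /fC2 /HC2M //].
by rewrite size_nseq; apply: Mf.
Qed.

Lemma r01_rad a : r01 Y M a <-> rad_alg (qimage pi M) (pi a).
Proof.
split=> [[m Mm] | [m [_ Mm]]].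
  exists m.+1; split=> // -[//|t] lt_mt.
  by rewrite -pi_iterprod_m1 qimage_pi; apply: Mm; rewrite ?all_in01_nseq ?size_nseq.
exists m; apply: (iterprod_in01_reduce (f := id)) => // k le_mk.
by rewrite -qimage_pi pi_iterprod_m1; apply: Mm; apply: leqW.
Qed.

Lemma srad_of_lsr01 a : lsr01 Y M a -> srad_alg (qimage pi M) (pi a).
Proof.
move=> Ml b c; have [_ pi_onto _ piM _] := Hpi.
have [x pix] := pi_onto (b * c); have [m Mm] := Ml x.
exists m.+1; split=> // -[//|t] lt_mt.
have := Mm (-1) (nseq t (-1)) isT (all_in01_nseq t); rewrite size_nseq => /(_ lt_mt).
by rewrite -qimage_pi piM pi_iterprod_m1 pix mulrAC.
Qed.

Lemma lsr01_of_srad a : srad_alg (qimage pi M) (pi a) -> lsr01 Y M a.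
Proof.
move=> Ms b; have [_ _ _ piM _] := Hpi.
have [m0 [_ Mm0]] := Ms (pi (Y b 0 a)) 1.
have [m1 [_ Mm1]] := Ms (pi b) 1.
exists (maxn m0 m1) => r s r01.
apply: iterprod_in01_reduce => [x Cx | k].
  exact: (C2_Yr HV b (in01_le0 r01) Cx).
rewrite geq_max => /andP [le_m0k le_m1k]; rewrite -qimage_pi.
case/orP: r01 => /eqP ->.
  rewrite pi_Y0_iterprod_m1; apply: qimage_muln.
  by rewrite -[_ * _]mulr1; apply: Mm0.
by rewrite piM pi_iterprod_m1 -[_ * _]mulr1; apply: Mm1; apply: leqW.
Qed.

Lemma rsr01_of_srad a : srad_alg (qimage pi M) (pi a) -> rsr01 Y M a.
Proof.
move=> Ms w; have [_ _ _ piM _] := Hpi.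
have [m0 [_ Mm0]] := Ms 1 (pi (Y a 0 w)).
have [m1 [_ Mm1]] := Ms 1 (pi w).
exists (maxn m0 m1) => n s n01.
apply: (iterprod_in01_reduce (f := fun x => Y x n w)) => [x Cx | k] /=.
  exact: (C2_Yl HV w (in01_le0 n01) Cx).
rewrite geq_max => /andP [le_m0k le_m1k]; rewrite -qimage_pi.
case/orP: n01 => /eqP ->.
  rewrite pi_iterprod_m1_Y0; apply: qimage_muln.
  by rewrite -[pi a ^+ k]mul1r; apply: Mm0.
by rewrite piM pi_iterprod_m1 -[pi a ^+ _]mul1r; apply: Mm1; apply: leqW.
Qed.

Lemma sr01_srad a : sr01 Y M a <-> srad_alg (qimage pi M) (pi a).
Proof.
split=> [[Ml _] | Ms]; first exact: srad_of_lsr01.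
by split; [apply: lsr01_of_srad | apply: rsr01_of_srad].
Qed.

Lemma MZ01_MZsub : MZ01 Y M <-> MZsub (qimage pi M).
Proof.
have [_ pi_onto _ _ _] := Hpi.
split=> MZ z; last by rewrite r01_rad sr01_srad.
by have [x <-] := pi_onto z; rewrite -r01_rad -sr01_srad.
Qed.

End C2Quotient.

Unset Implicit Arguments.

Theorem mainTheorem1 (V : lmodType CC) (Y : V -> int -> V -> V) (one : V)
  (HV : is_vertex_algebra Y one)
  (M : V -> Prop) (HM : is_subspace M) (HC2M : forall x : V, C2 Y x -> M x)
  (A : comPzRingType) (pi : V -> A) (Hpi : is_C2_quotient Y one pi) :
  (forall a : V, r01 Y M a <-> rad_alg (qimage pi M) (pi a)) /\
  (forall a : V, sr01 Y M a <-> srad_alg (qimage pi M) (pi a)) /\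
  (MZ01 Y M <-> MZsub (qimage pi M)).
Proof.
split; first exact: (r01_rad HV Hpi HM HC2M).
split; first exact: (sr01_srad HV Hpi HM HC2M).
exact: (MZ01_MZsub HV Hpi HM HC2M).
Qed.
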